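(* Let $C$ be a Reedy category, let $\Gamma$ be one of $\int N(C)$, $\int N^{-,+}(C)$, $\int N^{--,+}_+(C)$, $\mathrm{Down}_*(C)$, $\mathrm{Down}(C)$, and let $\mathrm{last}\colon\Gamma\to C$ be the last component functor. Let $F,G\colon C\to D$ be functors. Then for every natural transformation $\epsilon\colon F\circ\mathrm{last}\Rightarrow G\circ\mathrm{last}$ there is a unique natural transformation $\tilde\epsilon\colon F\Rightarrow G$ with $\tilde\epsilon\,\mathrm{last}=\epsilon$ (right whiskering).
   Context: A Reedy category $(C,C_-,C_+)$: wide subcategories with unique factorization of every morphism as ($C_-$ then $C_+$), every morphism of $C_\pm$ decidably identity or not, and the relation ($x<'y$ iff non-identity $x\to y$ in $C_+$ or non-identity $y\to x$ in $C_-$) well-founded. $\Delta$: finite ordinals $[n]$ and order-preserving maps. $\int N(C)$: objects $([n],X)$ with $X\colon[n]\to C$ a functor; morphisms $([m],X)\to([n],Y)$ are $(\alpha,\theta)$, $\alpha\colon[m]\to[n]$ in $\Delta$, $\theta\colon X\Rightarrow Y\circ\alpha$; composition $(\beta,\varphi)\circ(\alpha,\theta)=(\beta\alpha,(\varphi\alpha)\circ\theta)$. $\int N^{-,+}(C)$: subcategory of objects with $X$ sending all morphisms into $C_-$ and morphisms with all $\theta_i\in C_+$. $\int N^{--,+}_+(C)$: its subcategory of objects whose $X$ reflects identities and morphisms with $\alpha$ injective. Order on hom-sets: $(\alpha,\theta)\le(\alpha',\theta')$ iff $\alpha\le\alpha'$ pointwise and $\theta'_i=Y(\alpha(i)\le\alpha'(i))\circ\theta_i$;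 $\mathrm{Down}_*(C)$, $\mathrm{Down}(C)$ are the quotients of $\int N^{-,+}(C)$, $\int N^{--,+}_+(C)$ by the equivalence relation generated by $\le$ on hom-sets. $\mathrm{last}([n],X)=X(n)$, $\mathrm{last}(\alpha,\theta)=Y(\alpha(m)\le n)\circ\theta_m$ for $(\alpha,\theta)\colon([m],X)\to([n],Y)$, descending to the quotients. *)

(* (ordinals 'I_n.+1 model the finite ordinals [n] of Delta). *)
From mathcomp Require Import all_boot.
From Stdlib Require Import Relations ClassicalEpsilon.

Set Implicit Arguments.
Unset Strict Implicit.
Unset Printing Implicit Defensive.

Record Cat := {
  Obj : Type;
  Hom : Obj -> Obj -> Type;
  idm : forall x, Hom x x;
  comp : forall x y z, Hom y z -> Hom x y -> Hom x z }.

Arguments Hom {c} x y.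
Arguments idm {c} x.
Arguments comp {c x y z} g f.

Definition is_cat (C : Cat) : Prop :=
  [/\ (forall (x y : Obj C) (f : Hom x y), comp (idm y) f = f),
      (forall (x y : Obj C) (f : Hom x y), comp f (idm x) = f) &
      (forall (x y z w : Obj C) (f : Hom x y) (g : Hom y z) (h : Hom z w),
          comp h (comp g f) = comp (comp h g) f)].

Record Functor (A B : Cat) := {
  fobj : Obj A -> Obj B;
  fmor : forall x y : Obj A, Hom x y -> Hom (fobj x) (fobj y) }.

Arguments fobj {A B} f x.
Arguments fmor {A B} f {x y} u.

Definition is_functor (A B : Cat) (F : Functor A B) : Prop :=
  (forall x : Obj A, fmor F (idm x) = idm (fobj F x)) /\
  (forall (x y z : Obj A) (f : Hom x y) (g : Hom y z),
      fmor F (comp g f) = comp (fmor F g) (fmor F f)).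

Definition Fcomp (A B E : Cat) (F : Functor B E) (L : Functor A B) : Functor A E :=
  {| fobj := fun x => fobj F (fobj L x);
     fmor := fun x y u => fmor F (fmor L u) |}.

Definition is_natural (A B : Cat) (F G : Functor A B)
  (e : forall x : Obj A, Hom (fobj F x) (fobj G x)) : Prop :=
  forall (x y : Obj A) (f : Hom x y), comp (fmor G f) (e x) = comp (e y) (fmor F f).

Arguments is_natural {A B} F G e.

Definition whisker (A B E : Cat) (F G : Functor B E)
  (e : forall x : Obj B, Hom (fobj F x) (fobj G x)) (L : Functor A B) :
  forall x : Obj A, Hom (fobj (Fcomp F L) x) (fobj (Fcomp G L) x) :=
  fun x => e (fobj L x).

Arguments whisker {A B E F G} e L x.

Definition is_id (C : Cat) (x y : Obj C) (f : Hom x y) : Prop :=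
  exists e : x = y,
    (match e in _ = y' return Hom x y' -> Prop with
     | erefl => fun g => g = idm x end) f.

Record Reedy (C : Cat) := {
  Rm : forall x y : Obj C, Hom x y -> Prop;
  Rp : forall x y : Obj C, Hom x y -> Prop;
  Rm_id : forall x, Rm (idm x);
  Rp_id : forall x, Rp (idm x);
  Rm_comp : forall (x y z : Obj C) (f : Hom x y) (g : Hom y z),
      Rm f -> Rm g -> Rm (comp g f);
  Rp_comp : forall (x y z : Obj C) (f : Hom x y) (g : Hom y z),
      Rp f -> Rp g -> Rp (comp g f);
  R_fact : forall (x y : Obj C) (f : Hom x y),
      exists (z : Obj C) (g : Hom x z) (h : Hom z y),
        [/\ Rm g, Rp h, f = comp h g &
         forall (z' : Obj C) (g' : Hom x z') (h' : Hom z' y),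
           Rm g' -> Rp h' -> f = comp h' g' ->
           existT (fun w => (Hom x w * Hom w y)%type) z (g, h)
           = existT (fun w => (Hom x w * Hom w y)%type) z' (g', h')];
  Rm_dec : forall (x y : Obj C) (f : Hom x y), Rm f -> {is_id f} + {~ is_id f};
  Rp_dec : forall (x y : Obj C) (f : Hom x y), Rp f -> {is_id f} + {~ is_id f};
  R_wf : well_founded (fun x y : Obj C =>
      (exists f : Hom x y, Rp f /\ ~ is_id f) \/
      (exists f : Hom y x, Rm f /\ ~ is_id f)) }.

Arguments Rm {C} r {x y} f.
Arguments Rp {C} r {x y} f.

(* [n] is 'I_n.+1 with its order; a functor X : [n] -> C is given by its    *)
(* values on objects and on the arrows i <= j.                              *)

Record NObj (C : Cat) := {
  ndim : nat;
  nob : 'I_ndim.+1 -> Obj C;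
  nmor : forall i j : 'I_ndim.+1, (i <= j)%N -> Hom (nob i) (nob j);
  nmor_id : forall (i : 'I_ndim.+1) (h : (i <= i)%N), nmor h = idm (nob i);
  nmor_comp : forall (i j k : 'I_ndim.+1) (hij : (i <= j)%N) (hjk : (j <= k)%N)
      (hik : (i <= k)%N), comp (nmor hjk) (nmor hij) = nmor hik }.

Arguments nob {C} n i.
Arguments nmor {C} n {i j} h.

Record NHom (C : Cat) (X Y : NObj C) := {
  hal : 'I_(ndim X).+1 -> 'I_(ndim Y).+1;
  hal_mono : forall i j : 'I_(ndim X).+1, (i <= j)%N -> (hal i <= hal j)%N;
  hth : forall i, Hom (nob X i) (nob Y (hal i));
  hth_nat : forall (i j : 'I_(ndim X).+1) (h : (i <= j)%N) (h' : (hal i <= hal j)%N),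
      comp (nmor Y h') (hth i) = comp (hth j) (nmor X h) }.

Arguments hal {C X Y} n i.
Arguments hth {C X Y} n i.
Arguments hal_mono {C X Y} n {i j} h.
Arguments hth_nat {C X Y} n {i j} h h'.

Section IntN.
Variables (C : Cat) (HC : is_cat C).

Lemma NHom_id_nat (X : NObj C) (i j : 'I_(ndim X).+1) (h h' : (i <= j)%N) :
  comp (nmor X h') (idm (nob X i)) = comp (idm (nob X j)) (nmor X h).
Proof.
case: HC => idl idr _; rewrite idl idr; congr (nmor X _); exact: eq_irrelevance.
Qed.

Definition NHom_id (X : NObj C) : NHom X X :=
  {| hal := id; hal_mono := fun i j h => h;
     hth := fun i => idm (nob X i); hth_nat := @NHom_id_nat X |}.

Lemma NHom_comp_mono (X Y Z : NObj C) (v : NHom Y Z) (u : NHom X Y)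
  (i j : 'I_(ndim X).+1) : (i <= j)%N -> (hal v (hal u i) <= hal v (hal u j))%N.
Proof. by move=> h; apply: hal_mono; apply: hal_mono. Qed.

Lemma NHom_comp_nat (X Y Z : NObj C) (v : NHom Y Z) (u : NHom X Y)
  (i j : 'I_(ndim X).+1) (h : (i <= j)%N)
  (h' : (hal v (hal u i) <= hal v (hal u j))%N) :
  comp (nmor Z h') (comp (hth v (hal u i)) (hth u i))
  = comp (comp (hth v (hal u j)) (hth u j)) (nmor X h).
Proof.
case: HC => _ _ ass.
rewrite ass (hth_nat v (hal_mono u h) h') -ass (hth_nat u h) ass //.
Qed.

Definition NHom_comp (X Y Z : NObj C) (v : NHom Y Z) (u : NHom X Y) : NHom X Z :=
  {| hal := fun i => hal v (hal u i);
     hal_mono := @NHom_comp_mono X Y Z v u;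
     hth := fun i => comp (hth v (hal u i)) (hth u i);
     hth_nat := @NHom_comp_nat X Y Z v u |}.

Definition IntN : Cat :=
  {| Obj := NObj C; Hom := @NHom C; idm := NHom_id; comp := NHom_comp |}.

Definition hle (X Y : NObj C) (u v : NHom X Y) : Prop :=
  exists le : forall i, (hal u i <= hal v i)%N,
    forall i, hth v i = comp (nmor Y (le i)) (hth u i).

Definition lastN : Functor IntN C :=
  @Build_Functor IntN C (fun X : NObj C => nob X ord_max)
     (fun (X Y : NObj C) (u : NHom X Y) =>
       comp (nmor Y (leq_ord (hal u ord_max) : (hal u ord_max <= @ord_max (ndim Y))%N))
            (hth u ord_max)).

End IntN.

Section SubCat.
Variables (A : Cat) (P : Obj A -> Prop) (Q : forall x y : Obj A, Hom x y -> Prop).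
Hypothesis Qid : forall x, Q (idm x).
Hypothesis Qcomp : forall (x y z : Obj A) (f : Hom x y) (g : Hom y z),
  Q f -> Q g -> Q (comp g f).

Definition SubCat : Cat :=
  {| Obj := {x : Obj A | P x};
     Hom := fun x y => {f : Hom (proj1_sig x) (proj1_sig y) | Q f};
     idm := fun x => exist _ (idm (proj1_sig x)) (Qid (proj1_sig x));
     comp := fun x y z g f =>
       exist _ (comp (proj1_sig g) (proj1_sig f))
               (Qcomp (proj2_sig f) (proj2_sig g)) |}.

Definition SubFun (B : Cat) (L : Functor A B) : Functor SubCat B :=
  @Build_Functor SubCat B (fun x : {x : Obj A | P x} => fobj L (proj1_sig x))
     (fun (x y : {x : Obj A | P x}) (f : {f : Hom (proj1_sig x) (proj1_sig y) | Q f}) =>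
        fmor L (proj1_sig f)).
End SubCat.

Section QuotCat.
Variables (A : Cat) (E : forall x y : Obj A, Hom x y -> Hom x y -> Prop).

Definition genE (x y : Obj A) := clos_refl_sym_trans (Hom x y) (@E x y).

Definition QHom (x y : Obj A) :=
  {c : Hom x y -> Prop | exists f : Hom x y, c = genE f}.

Definition qcls (x y : Obj A) (f : Hom x y) : QHom x y :=
  exist _ (genE f) (ex_intro _ f erefl).

Definition qrep (x y : Obj A) (c : QHom x y) : Hom x y :=
  proj1_sig (constructive_indefinite_description _ (proj2_sig c)).

Definition QuotCat : Cat :=
  {| Obj := Obj A; Hom := QHom;
     idm := fun x => qcls (idm x);
     comp := fun x y z g f => qcls (comp (qrep g) (qrep f)) |}.

(* the functor induced on the quotient by a functor L that descends *)
Definition QuotFun (B : Cat) (L : Functor A B) : Functor QuotCat B :=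
  @Build_Functor QuotCat B (fun x : Obj A => fobj L x)
     (fun (x y : Obj A) (c : QHom x y) => fmor L (qrep c)).
End QuotCat.

Section Gammas.
Variables (C : Cat) (HC : is_cat C) (R : Reedy C).

Definition minus_obj (X : NObj C) : Prop :=
  forall (i j : 'I_(ndim X).+1) (h : (i <= j)%N), Rm R (nmor X h).
Definition plus_hom (X Y : NObj C) (u : NHom X Y) : Prop :=
  forall i, Rp R (hth u i).

Lemma plus_hom_id (X : NObj C) : plus_hom (NHom_id HC X).
Proof. by move=> i; apply: Rp_id. Qed.

Lemma plus_hom_comp (X Y Z : NObj C) (u : NHom X Y) (v : NHom Y Z) :
  plus_hom u -> plus_hom v -> plus_hom (NHom_comp HC v u).
Proof. by move=> hu hv i; apply: Rp_comp. Qed.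

Definition IntNmp : Cat :=
  SubCat (A := IntN HC) minus_obj (Q := plus_hom) plus_hom_id plus_hom_comp.

Definition refl_id_obj (X : Obj IntNmp) : Prop :=
  forall (i j : 'I_(ndim (proj1_sig X)).+1) (h : (i <= j)%N),
    is_id (nmor (proj1_sig X) h) -> i = j.
Definition inj_hom (X Y : Obj IntNmp) (u : Hom X Y) : Prop :=
  injective (hal (proj1_sig u)).

Lemma inj_hom_id (X : Obj IntNmp) : inj_hom (idm X).
Proof. by move=> i j. Qed.

Lemma inj_hom_comp (X Y Z : Obj IntNmp) (u : Hom X Y) (v : Hom Y Z) :
  inj_hom u -> inj_hom v -> inj_hom (comp v u).
Proof. by move=> hu hv i j /hv /hu. Qed.

Definition IntNmmp : Cat :=
  SubCat (A := IntNmp) refl_id_obj (Q := inj_hom) inj_hom_id inj_hom_comp.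

Definition lastNmp : Functor IntNmp C :=
  @SubFun (IntN HC) minus_obj (@plus_hom) plus_hom_id plus_hom_comp C (lastN HC).
Definition lastNmmp : Functor IntNmmp C :=
  @SubFun IntNmp refl_id_obj (@inj_hom) inj_hom_id inj_hom_comp C lastNmp.

Definition DownStar : Cat :=
  QuotCat (A := IntNmp) (fun X Y u v => hle (proj1_sig u) (proj1_sig v)).
Definition Down : Cat :=
  QuotCat (A := IntNmmp)
    (fun X Y u v => hle (proj1_sig (proj1_sig u)) (proj1_sig (proj1_sig v))).

Definition lastDownStar : Functor DownStar C := @QuotFun IntNmp _ C lastNmp.
Definition lastDown : Functor Down C := @QuotFun IntNmmp _ C lastNmmp.

Inductive GammaKind := K_IntN | K_IntNmp | K_IntNmmp | K_DownStar | K_Down.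

Definition Gamma (k : GammaKind) : Cat :=
  match k with
  | K_IntN => IntN HC
  | K_IntNmp => IntNmp
  | K_IntNmmp => IntNmmp
  | K_DownStar => DownStar
  | K_Down => Down
  end.

Definition lastF (k : GammaKind) : Functor (Gamma k) C :=
  match k as k0 return Functor (Gamma k0) C with
  | K_IntN => lastN HC
  | K_IntNmp => lastNmp
  | K_IntNmmp => lastNmmp
  | K_DownStar => lastDownStar
  | K_Down => lastDown
  end.

End Gammas.

(* For every object X of Γ, the inclusion of its last vertex is an arrow from the
   0-simplex at last X to X that last sends to the identity; by naturality, ε_X
   therefore only depends on last X, and ε̃_c := ε_(0-simplex at c) is forced.
   Every arrow of C factors as an arrow of C_- followed by one of C_+, and both
   are images under last (of the inclusion of vertex 0 into the 1-simplex g,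
   resp. of the map of 0-simplices given by h), so ε̃ inherits naturality from ε. *)

From mathcomp Require Import all_boot.
From Stdlib Require Import Relations ClassicalEpsilon.

Set Implicit Arguments.
Unset Strict Implicit.
Unset Printing Implicit Defensive.

Section CategoryLaws.
Variables (C : Cat) (HC : is_cat C).

Lemma comp_idl (x y : Obj C) (f : Hom x y) : comp (idm y) f = f.
Proof. by case: HC. Qed.

Lemma comp_idr (x y : Obj C) (f : Hom x y) : comp f (idm x) = f.
Proof. by case: HC. Qed.

Lemma compA (x y z w : Obj C) (f : Hom x y) (g : Hom y z) (h : Hom z w) :
  comp h (comp g f) = comp (comp h g) f.
Proof. by case: HC. Qed.

End CategoryLaws.

Section FunctorLaws.
Variables (A B : Cat) (F : Functor A B) (HF : is_functor F).

Lemma fmor_idm (x : Obj A) : fmor F (idm x) = idm (fobj F x).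
Proof. by case: HF. Qed.

Lemma fmor_comp (x y z : Obj A) (f : Hom x y) (g : Hom y z) :
  fmor F (comp g f) = comp (fmor F g) (fmor F f).
Proof. by case: HF. Qed.

End FunctorLaws.

Inductive image_generated (Γ C : Cat) (L : Functor Γ C) :
    forall c d : Obj C, Hom c d -> Prop :=
  | gen_image (x y : Obj Γ) (u : Hom x y) : image_generated L (fmor L u)
  | gen_idm (c : Obj C) : image_generated L (idm c)
  | gen_comp (c d e : Obj C) (f : Hom c d) (g : Hom d e) :
      image_generated L f -> image_generated L g -> image_generated L (comp g f).

Lemma image_generated_sub (Γ Γ' C : Cat) (L : Functor Γ C) (L' : Functor Γ' C) :
  (forall (x y : Obj Γ') (u : Hom x y), image_generated L (fmor L' u)) ->
  forall (c d : Obj C) (f : Hom c d), image_generated L' f -> image_generated L f.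
Proof. by move=> sub c d f; elim=> *; [exact: sub | exact: gen_idm | exact: gen_comp]. Qed.

Section Descent.
Variables (Γ C D : Cat) (L : Functor Γ C) (F G : Functor C D).
Hypotheses (HD : is_cat D) (HF : is_functor F) (HG : is_functor G).
Variables (pt : Obj C -> Obj Γ) (j : forall c, Hom (fobj L (pt c)) c)
  (j' : forall c, Hom c (fobj L (pt c))).
Hypothesis j_section : forall c, comp (j c) (j' c) = idm c.

Lemma natural_through_section (a : forall c, Hom (fobj F c) (fobj G c)) c :
  is_natural F G a ->
  a c = comp (fmor G (j c)) (comp (a (fobj L (pt c))) (fmor F (j' c))).
Proof.
move=> Ha.
by rewrite compA // Ha -compA // -fmor_comp // j_section fmor_idm // comp_idr.
Qed.

Lemma whisker_inj (a b : forall c, Hom (fobj F c) (fobj G c)) :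
  is_natural F G a -> is_natural F G b ->
  (forall x, whisker a L x = whisker b L x) -> forall c, a c = b c.
Proof.
move=> Ha Hb Hab c.
by rewrite (natural_through_section c Ha) (natural_through_section c Hb) [a _]Hab.
Qed.

Variable eps : forall x : Obj Γ, Hom (fobj (Fcomp F L) x) (fobj (Fcomp G L) x).
Hypothesis Heps : is_natural (Fcomp F L) (Fcomp G L) eps.
Hypothesis pt_cover : forall x, exists u : Hom (pt (fobj L x)) x, fmor L u = j (fobj L x).

Definition descent c : Hom (fobj F c) (fobj G c) :=
  comp (fmor G (j c)) (comp (eps (pt c)) (fmor F (j' c))).

Lemma whisker_descent x : whisker descent L x = eps x.
Proof.
have [u Lu] := pt_cover x.
have := Heps u; rewrite /= Lu => eps_u.
rewrite /whisker /descent compA // eps_u -compA // -fmor_comp //.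
by rewrite j_section fmor_idm // comp_idr.
Qed.

Lemma descent_natural_on c d (f : Hom c d) :
  image_generated L f -> comp (fmor G f) (descent c) = comp (descent d) (fmor F f).
Proof.
elim=> {c d f} [x y u | c | c d e f g _ IHf _ IHg].
- have eps_x : descent (fobj L x) = eps x := whisker_descent x.
  have eps_y : descent (fobj L y) = eps y := whisker_descent y.
  by rewrite eps_x eps_y; apply: Heps.
- by rewrite !fmor_idm // comp_idl // comp_idr.
- by rewrite !fmor_comp // -compA // IHf compA // IHg -compA.
Qed.

Hypothesis L_generates : forall c d (f : Hom c d), image_generated L f.

Lemma descent_exists_unique :
  exists et : forall c : Obj C, Hom (fobj F c) (fobj G c),
    [/\ is_natural F G et,
        (forall x, whisker et L x = eps x) &
        (forall et' : forall c : Obj C, Hom (fobj F c) (fobj G c),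
           is_natural F G et' ->
           (forall x, whisker et' L x = eps x) ->
           forall c, et' c = et c)].
Proof.
have descent_natural : is_natural F G descent.
  by move=> c d f; apply: descent_natural_on.
exists descent; split=> [//|x|et' Het' et'_eps]; first exact: whisker_descent.
by apply: whisker_inj => // x; rewrite et'_eps whisker_descent.
Qed.

End Descent.

Lemma image_generated_reedy (C : Cat) (R : Reedy C) (Γ : Cat) (L : Functor Γ C) :
  (forall (c z : Obj C) (g : Hom c z), Rm R g -> ~ is_id g -> image_generated L g) ->
  (forall (z d : Obj C) (h : Hom z d), Rp R h -> image_generated L h) ->
  forall (c d : Obj C) (f : Hom c d), image_generated L f.
Proof.
move=> gen_minus gen_plus c d f.
have [z [g [h [g_minus h_plus -> _]]]] := R_fact R f.
apply: gen_comp; last exact: gen_plus.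
case: (Rm_dec g_minus) => [[e]|]; last exact: gen_minus.
by case: z / e g h g_minus h_plus => g _ _ _ /= ->; apply: gen_idm.
Qed.

Lemma QuotFun_qcls (A B : Cat) (E : forall x y : Obj A, Hom x y -> Hom x y -> Prop)
    (L : Functor A B) :
  (forall (x y : Obj A) (u v : Hom x y), E x y u v -> fmor L u = fmor L v) ->
  forall (x y : Obj A) (u : Hom x y), fmor (QuotFun E L) (qcls E u) = fmor L u.
Proof.
move=> L_desc x y u; rewrite /= /qrep.
case: constructive_indefinite_description => v /= Ev.
have : genE E u v by rewrite Ev; apply: rst_refl.
by elim=> [a b /L_desc | a | a b _ -> | a b c _ -> _ ->].
Qed.

Lemma hle_lastN (C : Cat) (HC : is_cat C) (X Y : NObj C) (u v : NHom X Y) :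
  hle u v -> fmor (lastN HC) u = fmor (lastN HC) v.
Proof.
case=> le hv; rewrite /= hv compA //.
pose to_max (i : 'I_(ndim Y).+1) : (i <= @ord_max (ndim Y))%N := leq_ord i.
by rewrite (nmor_comp (le ord_max) (to_max (hal v ord_max)) (to_max (hal u ord_max))).
Qed.

Section Simplices.
Variables (C : Cat) (HC : is_cat C).

Definition point (c : Obj C) : NObj C :=
  {| ndim := 0; nob := fun _ => c; nmor := fun _ _ _ => idm c;
     nmor_id := fun _ _ => erefl;
     nmor_comp := fun _ _ _ _ _ _ => comp_idl HC (idm c) |}.

Definition edge_ob (c z : Obj C) (n : nat) : Obj C := if n is 0 then c else z.

Definition edge_mor (c z : Obj C) (g : Hom c z) (a b : nat) :
    (a <= b)%N -> Hom (edge_ob c z a) (edge_ob c z b) :=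
  match a, b with
  | 0, 0 => fun _ => idm c
  | 0, _.+1 => fun _ => g
  | _.+1, 0 => fun h => False_rect _ (Bool.diff_false_true h)
  | _.+1, _.+1 => fun _ => idm z
  end.

Lemma edge_mor_id (c z : Obj C) (g : Hom c z) a (h : (a <= a)%N) : edge_mor g h = idm _.
Proof. by case: a h. Qed.

Lemma edge_mor_comp (c z : Obj C) (g : Hom c z) a b d (hab : (a <= b)%N)
  (hbd : (b <= d)%N) (had : (a <= d)%N) :
  comp (edge_mor g hbd) (edge_mor g hab) = edge_mor g had.
Proof.
by case: a hab had => [|a]; case: b hbd => [|b]; case: d => [|d] //= *;
  rewrite ?comp_idl ?comp_idr.
Qed.

Definition edge (c z : Obj C) (g : Hom c z) : NObj C :=
  {| ndim := 1; nob := fun i => edge_ob c z i; nmor := fun i j h => edge_mor g h;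
     nmor_id := fun i h => edge_mor_id g h;
     nmor_comp := fun i j k => @edge_mor_comp c z g i j k |}.

Definition source_incl (c z : Obj C) (g : Hom c z) : NHom (point c) (edge g) :=
  @Build_NHom C (point c) (edge g) (fun _ => ord0) (fun _ _ _ => leqnn 0)
    (fun _ => idm c) (fun _ _ _ _ => erefl).

Lemma last_incl_nat (X : NObj C) (i j : 'I_1) (h : (i <= j)%N)
  (h' : (@ord_max (ndim X) <= ord_max)%N) :
  comp (nmor X h') (idm _) = comp (idm _) (nmor (point (nob X ord_max)) h).
Proof. by rewrite nmor_id. Qed.

Definition last_incl (X : NObj C) : NHom (point (nob X ord_max)) X :=
  @Build_NHom C (point (nob X ord_max)) X (fun _ => ord_max) (fun _ _ _ => leqnn _)
    (fun _ => idm _) (@last_incl_nat X).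

Lemma point_map_nat (z d : Obj C) (h : Hom z d) (i j : 'I_1) (hij hij' : (i <= j)%N) :
  comp (nmor (point d) hij') h = comp h (nmor (point z) hij).
Proof. by rewrite /= comp_idl // comp_idr. Qed.

Definition point_map (z d : Obj C) (h : Hom z d) : NHom (point z) (point d) :=
  @Build_NHom C (point z) (point d) id (fun _ _ hij => hij) (fun _ => h)
    (@point_map_nat z d h).

Lemma lastN_source_incl (c z : Obj C) (g : Hom c z) : fmor (lastN HC) (source_incl g) = g.
Proof. exact: comp_idr. Qed.

Lemma lastN_last_incl (X : NObj C) : fmor (lastN HC) (last_incl X) = idm _.
Proof. by rewrite /= nmor_id comp_idr. Qed.

Lemma lastN_point_map (z d : Obj C) (h : Hom z d) : fmor (lastN HC) (point_map h) = h.
Proof. exact: comp_idl. Qed.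

End Simplices.

Section Gammas.
Variables (C : Cat) (HC : is_cat C) (R : Reedy C).

Lemma minus_point (c : Obj C) : minus_obj R (point HC c).
Proof. by move=> *; apply: Rm_id. Qed.

Lemma minus_edge (c z : Obj C) (g : Hom c z) : Rm R g -> minus_obj R (edge HC g).
Proof. by move=> g_minus [[|i] ?] [[|j] ?] //= ?; apply: Rm_id. Qed.

Definition pointmp (c : Obj C) : Obj (IntNmp HC R) :=
  exist _ (point HC c) (@minus_point c).

Lemma refl_id_point (c : Obj C) : refl_id_obj (pointmp c).
Proof. by move=> i j _ _; rewrite !ord1. Qed.

Lemma refl_id_edge (c z : Obj C) (g : Hom c z) (g_minus : Rm R g) :
  ~ is_id g -> refl_id_obj (exist _ (edge HC g) (minus_edge g_minus) : Obj (IntNmp HC R)).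
Proof. by move=> g_nonid [[|[|i]] ?] [[|[|j]] ?] //= _ ?; apply: val_inj. Qed.

Definition pointmmp (c : Obj C) : Obj (IntNmmp HC R) :=
  exist _ (pointmp c) (@refl_id_point c).

Lemma injective_from_I1 (T : Type) (f : 'I_1 -> T) : injective f.
Proof. by move=> i j _; rewrite !ord1. Qed.

Definition mp_hom (X Y : Obj (IntNmp HC R)) (u : NHom (proj1_sig X) (proj1_sig Y))
  (u_plus : plus_hom R u) : Hom X Y := exist _ u u_plus.

Definition mmp_hom (X Y : Obj (IntNmmp HC R))
  (u : NHom (proj1_sig (proj1_sig X)) (proj1_sig (proj1_sig Y)))
  (u_plus : plus_hom R u) (u_inj : injective (hal u)) : Hom X Y :=
  exist _ (exist _ u u_plus) u_inj.

Arguments mp_hom {X Y} u u_plus.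
Arguments mmp_hom {X Y} u u_plus u_inj.

Lemma lastNmmp_generates (c d : Obj C) (f : Hom c d) : image_generated (lastNmmp HC R) f.
Proof.
apply: (image_generated_reedy (R := R)) => [a z g g_minus g_nonid | z b h h_plus].
- pose Y : Obj (IntNmmp HC R) := exist _ _ (@refl_id_edge _ _ _ g_minus g_nonid).
  have := gen_image (lastNmmp HC R) (mmp_hom (X := pointmmp a) (Y := Y)
    (source_incl HC g) (fun=> Rp_id R _) (@injective_from_I1 _ _)).
  by rewrite [fmor _ _]lastN_source_incl.
- have := gen_image (lastNmmp HC R) (mmp_hom (X := pointmmp z) (Y := pointmmp b)
    (point_map HC h) (fun=> h_plus) (@injective_from_I1 _ _)).
  by rewrite [fmor _ _]lastN_point_map.
Qed.

Lemma lastNmp_generates (c d : Obj C) (f : Hom c d) : image_generated (lastNmp HC R) f.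
Proof.
apply: image_generated_sub (lastNmmp_generates f) => X Y u.
exact: (gen_image _ (proj1_sig u)).
Qed.

Lemma lastN_generates (c d : Obj C) (f : Hom c d) : image_generated (lastN HC) f.
Proof.
apply: image_generated_sub (lastNmp_generates f) => X Y u.
exact: (gen_image _ (proj1_sig u)).
Qed.

Lemma lastDownStar_qcls (X Y : Obj (IntNmp HC R)) (u : Hom X Y) :
  fmor (lastDownStar HC R) (qcls _ u) = fmor (lastNmp HC R) u.
Proof. by apply: QuotFun_qcls => ? ? ? ?; apply: hle_lastN. Qed.

Lemma lastDown_qcls (X Y : Obj (IntNmmp HC R)) (u : Hom X Y) :
  fmor (lastDown HC R) (qcls _ u) = fmor (lastNmmp HC R) u.
Proof. by apply: QuotFun_qcls => ? ? ? ?; apply: hle_lastN. Qed.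

Lemma lastDownStar_generates (c d : Obj C) (f : Hom c d) :
  image_generated (lastDownStar HC R) f.
Proof.
apply: image_generated_sub (lastNmp_generates f) => X Y u.
by rewrite -lastDownStar_qcls; apply: gen_image.
Qed.

Lemma lastDown_generates (c d : Obj C) (f : Hom c d) : image_generated (lastDown HC R) f.
Proof.
apply: image_generated_sub (lastNmmp_generates f) => X Y u.
by rewrite -lastDown_qcls; apply: gen_image.
Qed.

Lemma lastN_cover (X : NObj C) :
  exists u : NHom (point HC (nob X ord_max)) X,
    fmor (lastN HC) u = idm (fobj (lastN HC) X).
Proof. by exists (last_incl HC X); apply: lastN_last_incl. Qed.

Lemma lastNmp_cover (X : Obj (IntNmp HC R)) :
  exists u : Hom (pointmp (fobj (lastNmp HC R) X)) X,
    fmor (lastNmp HC R) u = idm (fobj (lastNmp HC R) X).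
Proof.
exists (@mp_hom (pointmp _) X (last_incl HC (proj1_sig X)) (fun=> Rp_id R _)).
exact: lastN_last_incl.
Qed.

Lemma lastNmmp_cover (X : Obj (IntNmmp HC R)) :
  exists u : Hom (pointmmp (fobj (lastNmmp HC R) X)) X,
    fmor (lastNmmp HC R) u = idm (fobj (lastNmmp HC R) X).
Proof.
exists (@mmp_hom (pointmmp _) X (last_incl HC (proj1_sig (proj1_sig X))) (fun=> Rp_id R _)
  (@injective_from_I1 _ _)).
exact: lastN_last_incl.
Qed.

Lemma lastDownStar_cover (X : Obj (DownStar HC R)) :
  exists u : @Hom (DownStar HC R) (pointmp (fobj (lastDownStar HC R) X)) X,
    fmor (lastDownStar HC R) u = idm (fobj (lastDownStar HC R) X).
Proof.
have [u Lu] := lastNmp_cover X.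
by exists (qcls _ u); rewrite lastDownStar_qcls.
Qed.

Lemma lastDown_cover (X : Obj (Down HC R)) :
  exists u : @Hom (Down HC R) (pointmmp (fobj (lastDown HC R) X)) X,
    fmor (lastDown HC R) u = idm (fobj (lastDown HC R) X).
Proof.
have [u Lu] := lastNmmp_cover X.
by exists (qcls _ u); rewrite lastDown_qcls.
Qed.

End Gammas.

Theorem lemma7p8 (C : Cat) (HC : is_cat C) (R : Reedy C) (k : GammaKind)
  (D : Cat) (HD : is_cat D) (F G : Functor C D)
  (HF : is_functor F) (HG : is_functor G)
  (eps : forall x : Obj (Gamma HC R k),
           Hom (fobj (Fcomp F (lastF HC R k)) x) (fobj (Fcomp G (lastF HC R k)) x))
  (Heps : is_natural (Fcomp F (lastF HC R k)) (Fcomp G (lastF HC R k)) eps) :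
  exists et : forall c : Obj C, Hom (fobj F c) (fobj G c),
    [/\ is_natural F G et,
        (forall x, whisker et (lastF HC R k) x = eps x) &
        (forall et' : forall c : Obj C, Hom (fobj F c) (fobj G c),
           is_natural F G et' ->
           (forall x, whisker et' (lastF HC R k) x = eps x) ->
           forall c, et' c = et c)].
Proof.
have idm_section (c : Obj C) : comp (idm c) (idm c) = idm c by apply: comp_idl.
case: k eps Heps => eps Heps /=.
- exact: (descent_exists_unique (L := lastN HC) (pt := point HC) HD HF HG idm_section Heps
    (lastN_cover HC) (lastN_generates HC R)).
- exact: (descent_exists_unique (L := lastNmp HC R) (pt := pointmp HC R) HD HF HG idm_section
    Heps (@lastNmp_cover _ HC R) (@lastNmp_generates _ HC R)).
- exact: (descent_exists_unique (L := lastNmmp HC R) (pt := pointmmp HC R) HD HF HG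
    idm_section Heps (@lastNmmp_cover _ HC R) (@lastNmmp_generates _ HC R)).
- exact: (descent_exists_unique (L := lastDownStar HC R) (pt := pointmp HC R) HD HF HG
    idm_section Heps (@lastDownStar_cover _ HC R) (@lastDownStar_generates _ HC R)).
- exact: (descent_exists_unique (L := lastDown HC R) (pt := pointmmp HC R) HD HF HG
    idm_section Heps (@lastDown_cover _ HC R) (@lastDown_generates _ HC R)).
Qed.
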